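(* Let $c\in\{0,1\}^n$ and let $S_c$ be the set of all points of $\{0,1\}^n$ at Hamming distance exactly $1$ from $c$. Let $A\subseteq S_c$ with $|A|=\ell\ge 3$, and let $c_A=\frac{1}{|A|}\sum_{x\in A}x\in\mathbb R^n$ be its centroid. Then (a) $d(c_A,a)<1$ for every $a\in A$, and (b) $d(c_A,a)\ge 1$ for every $a\in\{0,1\}^n\setminus(A\cup\{c\})$, where $d$ is the Euclidean distance. *)

From HB Require Import structures.
From mathcomp Require Import all_boot all_order all_algebra.
From mathcomp Require Import reals.
Set Implicit Arguments. Unset Strict Implicit. Unset Printing Implicit Defensive.
Import Order.TTheory GRing.Theory Num.Theory.
Local Open Scope ring_scope.

Definition cube (n : nat) := {ffun 'I_n -> bool}.

Definition hamming (n : nat) (x y : cube n) : nat := #|[set i | x i != y i]|.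

Definition Sc (n : nat) (c : cube n) : {set cube n} :=
  [set x | hamming x c == 1%N].

Definition embed (R : realType) (n : nat) (x : cube n) : 'rV[R]_n :=
  \row_i (x i)%:R.

Definition centroid (R : realType) (n : nat) (A : {set cube n}) : 'rV[R]_n :=
  (#|A|%:R)^-1 *: \sum_(x in A) embed R x.

Definition edist (R : realType) (n : nat) (u v : 'rV[R]_n) : R :=
  Num.sqrt (\sum_(i < n) (u 0 i - v 0 i) ^+ 2).

From HB Require Import structures.
From mathcomp Require Import all_boot all_order all_algebra.
From mathcomp Require Import reals.
From mathcomp Require Import ring lra.
Import Order.TTheory GRing.Theory Num.Theory.
Set Implicit Arguments. Unset Strict Implicit. Unset Printing Implicit Defensive.
Local Open Scope ring_scope.

(* Every point of S_c is c with a single coordinate flipped, so A is the set of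
   flips of c along some J of size l.  Coordinatewise the centroid is c moved by
   1/l towards the flipped value on J, whence for every b in the cube
     d(c_A, b)^2 = d_H(b, c) + (1 - 2k) / l,   k = |J ∩ {i | b_i <> c_i}|.
   For a in A this is 1 - 1/l.  For b outside A ∪ {c}, either d_H(b, c) = 1 and
   k = 0, giving 1 + 1/l, or d_H(b, c) = h >= 2 and k <= h, giving at least
   h + (1 - 2h)/l, which is >= 1 as soon as l >= 3. *)

Lemma imset_preimset (aT rT : finType) (f : aT -> rT) (A : {set rT}) :
  A \subset f @: setT -> f @: (f @^-1: A) = A.
Proof.
move=> sAf; apply/setP => y; apply/imsetP/idP => [[x + ->]|yA]; first by rewrite inE.
by have /imsetP[x _ yx] := subsetP sAf y yA; exists x; rewrite // inE -yx.
Qed.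

Lemma sum_indicator (R : pzSemiRingType) (I : finType) (S : {set I}) :
  \sum_i (i \in S)%:R = #|S|%:R :> R.
Proof.
by rewrite -sum1_card natr_sum [RHS]big_mkcond; apply: eq_bigr => i _; case: (i \in S).
Qed.

Lemma sum_delta (R : pzSemiRingType) (I : finType) (J : {pred I}) i :
  \sum_(j in J) (i == j)%:R = (i \in J)%:R :> R.
Proof.
rewrite big_mkcond (bigD1 i) //= eqxx big1 => [|j /negbTE]; last first.
  by rewrite eq_sym => ->; case: (_ \in _).
by rewrite addr0; case: (i \in J).
Qed.

Lemma edist_lt1 (R : realType) n (u v : 'rV[R]_n) :
  (edist u v < 1) = (\sum_i (u 0 i - v 0 i) ^+ 2 < 1).
Proof. by rewrite /edist -[in LHS]sqrtr1 ltr_sqrt. Qed.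

Lemma edist_ge1 (R : realType) n (u v : 'rV[R]_n) :
  (1 <= edist u v) = (1 <= \sum_i (u 0 i - v 0 i) ^+ 2).
Proof.
rewrite /edist -[in LHS]sqrtr1 ler_sqrt //.
by apply: sumr_ge0 => i _; exact: sqr_ge0.
Qed.

Lemma hamming_eq0 n (x y : cube n) : (hamming x y == 0%N) = (x == y).
Proof.
rewrite /hamming cards_eq0; apply/eqP/eqP => [xy|->]; last first.
  by apply/setP => i; rewrite !inE eqxx.
by apply/ffunP => i; move/setP/(_ i): xy; rewrite !inE => /negbFE/eqP.
Qed.

Section Flips.
Variable n : nat.
Implicit Types (c x : cube n) (j : 'I_n).

Definition flip c j : cube n := [ffun i => c i (+) (i == j)].

Lemma flip_inj c : injective (flip c).
Proof.
move=> j k /ffunP/(_ j); rewrite !ffunE eqxx.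
by case: (c j); case: eqP => // ->.
Qed.

Lemma flip_diffs c j : [set i | flip c j i != c i] = [set j].
Proof. by apply/setP => i; rewrite !inE ffunE; case: (c i); case: (i == j). Qed.

Lemma hamming_flip c j : hamming (flip c j) c = 1%N.
Proof. by rewrite /hamming flip_diffs cards1. Qed.

Lemma ScP c x : reflect (exists j, x = flip c j) (x \in Sc c).
Proof.
apply: (iffP idP) => [|[j ->]]; last by rewrite inE hamming_flip.
rewrite inE => /cards1P[j xj]; exists j; apply/ffunP => i; rewrite ffunE.
move/setP/(_ i): xj; rewrite !inE.
by case: (i == j); case: (x i); case: (c i).
Qed.

Lemma Sc_flips c : Sc c = flip c @: setT.
Proof. by apply/setP => x; apply/ScP/imsetP => [[j ->]|[j _ ->]]; exists j. Qed.

End Flips.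

Lemma ler1_hamming_bound (R : realFieldType) (l h k : nat) :
  (3 <= l)%N -> (2 <= h)%N -> (k <= h)%N -> 1 <= h%:R + (1 - 2 * k%:R) / l%:R :> R.
Proof.
rewrite -!(ler_nat R) => l3 h2 kh.
have l_gt0 : 0 < l%:R :> R by apply: lt_le_trans l3.
by rewrite -lerBlDl ler_pdivlMr //; nra.
Qed.

Section CentroidOfFlips.
Variables (R : realType) (n : nat) (c : cube n) (J : {set 'I_n}).
Hypothesis J_neq0 : J != set0.

Let l := #|J|%:R : R.

Lemma l_neq0 : l != 0.
Proof. by rewrite pnatr_eq0 cards_eq0. Qed.

Lemma l_inv_gt0 : 0 < l^-1.
Proof. by rewrite invr_gt0 lt_neqAle eq_sym l_neq0 ler0n. Qed.

Lemma centroid_flips i :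
  centroid R (flip c @: J) 0 i = (c i)%:R + (i \in J)%:R * (1 - 2 * (c i)%:R) / l.
Proof.
rewrite /centroid mxE summxE card_imset; last exact: flip_inj.
rewrite big_imset /=; last by move=> j k _ _; apply: flip_inj.
under eq_bigr => j _ do rewrite mxE ffunE.
have -> : \sum_(j in J) ((c i (+) (i == j) : nat)%:R : R) =
          \sum_(j in J) ((c i)%:R + (i == j)%:R * (1 - 2 * (c i)%:R)).
  by apply: eq_bigr => j _; case: (c i); case: (i == j) => /=; ring.
rewrite big_split /= -mulr_suml sum_delta sumr_const -mulr_natr.
by field; exact: l_neq0.
Qed.

Lemma sqdist_centroid_flips (b : cube n) :
  \sum_i (centroid R (flip c @: J) 0 i - embed R b 0 i) ^+ 2 =
  (hamming b c)%:R + (1 - 2 * #|J :&: [set i | b i != c i]|%:R) / l.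
Proof.
set D := [set i | b i != c i].
under eq_bigr => i _ do rewrite centroid_flips mxE.
rewrite (eq_bigr (fun i => (i \in D)%:R - 2 / l * (i \in J :&: D)%:R + (i \in J)%:R / l ^+ 2)).
  rewrite !big_split /= sumrN -mulr_sumr -mulr_suml !sum_indicator /hamming -/D -/l.
  by field; exact: l_neq0.
move=> i _; rewrite !inE; have := l_neq0.
by case: (i \in J); case: (b i); case: (c i) => /= ?; field.
Qed.

Lemma edist_centroid_flips_lt1 j :
  j \in J -> edist (centroid R (flip c @: J)) (embed R (flip c j)) < 1.
Proof.
move=> jJ; have := l_inv_gt0.
rewrite edist_lt1 sqdist_centroid_flips hamming_flip flip_diffs.
by rewrite (setIidPr _) ?sub1set // cards1; lra.
Qed.

Lemma edist_centroid_flips_ge1 (b : cube n) :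
  (3 <= #|J|)%N -> b \notin flip c @: J -> b != c ->
  1 <= edist (centroid R (flip c @: J)) (embed R b).
Proof.
move=> J3 bNJ bNc; rewrite edist_ge1 sqdist_centroid_flips.
have [h2|h1] := ltnP 1 (hamming b c).
  by apply: ler1_hamming_bound => //; exact/subset_leq_card/subsetIr.
have /ScP[j defb] : b \in Sc c by rewrite inE eqn_leq h1 lt0n hamming_eq0.
have jNJ : j \notin J by apply: contra bNJ => jJ; rewrite defb imset_f.
have /eqP J1 : J :&: [set j] == set0 by rewrite setI_eq0 disjoint_sym disjoints1.
by rewrite defb flip_diffs hamming_flip J1 cards0; have := l_inv_gt0; lra.
Qed.

End CentroidOfFlips.

Unset Implicit Arguments. Set Strict Implicit.

Theorem lemma4 (R : realType) (n : nat) (c : cube n) (A : {set cube n})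
    (l : nat) (hAS : A \subset Sc c) (hcard : #|A| = l) (hl : (3 <= l)%N) :
  (forall a : cube n, a \in A -> edist (centroid R A) (embed R a) < 1) /\
  (forall a : cube n, a \notin A -> a != c ->
     1 <= edist (centroid R A) (embed R a)).
Proof.
set J := flip c @^-1: A.
have defA : flip c @: J = A by apply: imset_preimset; rewrite -Sc_flips.
have cardJ : #|J| = l by rewrite -hcard -defA card_imset //; exact: flip_inj.
have J_neq0 : J != set0 by rewrite -cards_eq0 cardJ -lt0n (ltn_trans _ hl).
rewrite -defA; split=> [_ /imsetP[j jJ ->]|a].
  exact: edist_centroid_flips_lt1.
by apply: edist_centroid_flips_ge1; rewrite ?cardJ.
Qed.
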